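(* For every MPDA $\mathcal A$ there is a pop-normalized MPDA $\mathcal A'$ with $L(\mathcal A')=L(\mathcal A)$.
   Context: A Moore push-down automaton (MPDA) is $\mathcal A=(Q,\Sigma,\Gamma,\delta,\tau,I,F)$ with finite sets $Q$ (states), $\Sigma$ (input symbols), $\Gamma$ (stack symbols), transitions $\delta\subseteq(Q\times\Gamma^{\le1}\times\Gamma^{\le1}\times Q)\setminus(Q\times\Gamma\times\Gamma\times Q)$ with $\Gamma^{\le1}=\{\varepsilon\}\cup\Gamma$, output function $\tau:Q\to\Sigma$, and $I,F\subseteq Q$. Configurations are $\langle q,\alpha\rangle\in Q\times\Gamma^*$; moves $\langle q,\gamma\alpha\rangle\vdash\langle q',\gamma'\alpha\rangle$ for $(q,\gamma,\gamma',q')\in\delta$ whenever $\gamma\alpha\ne\varepsilon$. Initial configurations: $q\in I$, $\alpha\in\Gamma$; final: $q\in F$, $\alpha=\varepsilon$. $L(\mathcal A)$ is the set of strings $\tau(q_0)\cdots\tau(q_n)$ for accepting runs $\langle q_0,\alpha_0\rangle\vdash\cdots\vdash\langle q_n,\alpha_n\rangle$ from an initial to a final configuration. The MPDA is pop-normalized if there is a map $\mathrm{return}:\Gamma\to Q$ such that $q'=\mathrm{return}(\gamma)$ for every transition $(q,\gamma,\varepsilon,q')\in\delta$ with $\gamma\in\Gamma$. *)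

From mathcomp Require Import all_boot.
Set Implicit Arguments. Unset Strict Implicit. Unset Printing Implicit Defensive.

(* Moore push-down automata (MPDA).  Gamma^{<=1} is rendered as [option G]
   (None = epsilon, Some g = the one-letter word g). *)
Record MPDA (Sigma : Type) := {
  mQ : finType;
  mG : finType;
  mdelta : mQ -> option mG -> option mG -> mQ -> bool;
  mtau : mQ -> Sigma;
  mI : mQ -> bool;
  mF : mQ -> bool
}.
Arguments mQ {Sigma} _.
Arguments mG {Sigma} _.
Arguments mdelta {Sigma} _ _ _ _ _.
Arguments mtau {Sigma} _ _.
Arguments mI {Sigma} _ _.
Arguments mF {Sigma} _ _.

Definition wf_MPDA Sigma (A : MPDA Sigma) : Prop :=
  forall q g g' q', mdelta A q (Some g) (Some g') q' = false.

Definition owd (G : Type) (o : option G) : seq G :=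
  match o with None => [::] | Some g => [:: g] end.

Definition config Sigma (A : MPDA Sigma) : Type := (mQ A * seq (mG A))%type.

Definition step Sigma (A : MPDA Sigma) (c c' : config A) : Prop :=
  exists (q q' : mQ A) (g g' : option (mG A)) (alpha : seq (mG A)),
    [/\ mdelta A q g g' q',
        owd g ++ alpha <> [::],
        c = (q, owd g ++ alpha) &
        c' = (q', owd g' ++ alpha)].

Fixpoint is_run Sigma (A : MPDA Sigma) (c0 : config A) (cs : seq (config A))
  : Prop :=
  match cs with
  | [::] => True
  | c1 :: cs' => step c0 c1 /\ is_run c1 cs'
  end.

Definition initial_config Sigma (A : MPDA Sigma) (c : config A) : Prop :=
  mI A c.1 /\ size c.2 = 1.

Definition final_config Sigma (A : MPDA Sigma) (c : config A) : Prop :=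
  mF A c.1 /\ c.2 = [::].

Definition lang Sigma (A : MPDA Sigma) (w : seq Sigma) : Prop :=
  exists (c0 : config A) (cs : seq (config A)),
    [/\ initial_config c0,
        is_run c0 cs,
        final_config (last c0 cs) &
        w = map (fun c : config A => mtau A c.1) (c0 :: cs)].

Definition pop_normalized Sigma (A : MPDA Sigma) : Prop :=
  exists ret : mG A -> mQ A,
    forall q g q', mdelta A q (Some g) None q' -> q' = ret g.

From mathcomp Require Import all_boot.

Set Implicit Arguments.
Unset Strict Implicit.
Unset Printing Implicit Defensive.

(* Annotate every stack symbol g with a guessed return state r: a push of g may
   guess any r, and a pop of (g, r) must go to r.  Erasing the annotations maps
   runs of the new automaton to runs of A.  Conversely, an accepting run of A
   ends with an empty stack, so every symbol it pushes is eventually popped;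
   reading the run backwards, each symbol is annotated with the state its pop
   leads to.  This backward lifting needs that A never replaces a symbol by
   another one, which is exactly well-formedness. *)

Section PopNormalize.

Variables (Sigma : Type) (A : MPDA Sigma).

Definition pop_normalize_delta (q : mQ A) (o o' : option (mG A * mQ A))
    (q' : mQ A) : bool :=
  match o, o' with
  | None, None => mdelta A q None None q'
  | None, Some (g', _) => mdelta A q None (Some g') q'
  | Some (g, r), None => mdelta A q (Some g) None q' && (q' == r)
  | Some _, Some _ => false
  end.

Definition pop_normalize : MPDA Sigma :=
  {| mQ := mQ A; mG := (mG A * mQ A)%type; mdelta := pop_normalize_delta;
     mtau := mtau A; mI := mI A; mF := mF A |}.

Lemma pop_normalize_wf : wf_MPDA pop_normalize.
Proof. by move=> q [g r] [g' r'] q'. Qed.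

Lemma pop_normalize_pop_normalized : pop_normalized pop_normalize.
Proof. by exists snd => q [g r] q' /andP[_ /eqP]. Qed.

Definition erase_config (c : config pop_normalize) : config A :=
  (c.1, map fst c.2).

Lemma initial_config_erase c : initial_config (erase_config c) <-> initial_config c.
Proof. by rewrite /initial_config /= size_map. Qed.

Lemma final_config_erase c : final_config (erase_config c) <-> final_config c.
Proof. by case: c => q [|g s]; split=> -[]. Qed.

Lemma step_erase c c' : step c c' -> step (erase_config c) (erase_config c').
Proof.
move=> [q [q' [o [o' [al [Hd Hne -> ->]]]]]].
exists q, q', (omap fst o), (omap fst o'), (map fst al).
case: o o' Hd Hne => [[g r]|] [[g' r']|] //= Hd Hne; split=> //.
- by case/andP: Hd.
- by case: al Hne.
- by case: al Hne.
Qed.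

Lemma run_erase c0 cs : is_run c0 cs -> is_run (erase_config c0) (map erase_config cs).
Proof.
elim: cs c0 => [|c1 cs IHcs] c0 //= [Hstep Hrun].
by split; [exact: step_erase | exact: IHcs].
Qed.

Hypothesis wfA : wf_MPDA A.

Lemma step_lift c0 c1' : step c0 (erase_config c1') ->
  exists c0', erase_config c0' = c0 /\ step c0' c1'.
Proof.
case: c1' => q' b1 [q [q1 [o [o' [al [Hd Hne -> [Eq Eb1]]]]]]] /=; subst q1.
case: o o' Hd Hne Eb1 => [g|] [g'|] //= Hd Hne Eb1.
- by rewrite wfA in Hd.
- exists (q, (g, q') :: b1); split; first by rewrite /erase_config /= Eb1.
  by exists q, q', (Some (g, q')), None, b1; rewrite /= Hd eqxx.
- case: b1 Eb1 => [|[g1 r1] b1] //= [-> Eb1].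
  exists (q, b1); split; first by rewrite /erase_config /= Eb1.
  exists q, q', None, (Some (g', r1)), b1; split=> //.
  by case: b1 Eb1 => // Eb1; rewrite -Eb1 in Hne.
- exists (q, b1); split; first by rewrite /erase_config /= Eb1.
  exists q, q', None, None, b1; split=> //.
  by case: b1 Eb1 => // Eb1; rewrite -Eb1 in Hne.
Qed.

Lemma accepting_run_lift c0 cs : is_run c0 cs -> final_config (last c0 cs) ->
  exists c0' cs',
    [/\ erase_config c0' = c0, map erase_config cs' = cs & is_run c0' cs'].
Proof.
elim: cs c0 => [|c1 cs IHcs] [q0 a0] /=.
  by move=> _ [_ /= ->]; exists (q0, [::]), [::].
move=> [Hstep Hrun] Hfinal.
have [c1' [cs' [Ec1 <- Hrun']]] := IHcs _ Hrun Hfinal.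
subst c1.
have [c0' [Ec0' Hstep']] := step_lift Hstep.
by exists c0', (c1' :: cs'); split.
Qed.

Lemma lang_pop_normalize w : lang pop_normalize w <-> lang A w.
Proof.
split.
- move=> [c0 [cs [Hinit Hrun Hfinal ->]]].
  exists (erase_config c0), (map erase_config cs); split.
  + exact/initial_config_erase.
  + exact: run_erase.
  + by rewrite last_map; apply/final_config_erase.
  + by rewrite /= -map_comp.
- move=> [c0 [cs [Hinit Hrun Hfinal ->]]].
  have [c0' [cs' [Ec0 Ecs Hrun']]] := accepting_run_lift Hrun Hfinal.
  subst c0 cs.
  exists c0', cs'; split=> //.
  + exact/initial_config_erase.
  + by apply/final_config_erase; rewrite -last_map.
  + by rewrite /= -map_comp.
Qed.

End PopNormalize.

Theorem lemma3p3 (Sigma : finType) (A : MPDA Sigma) :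
  wf_MPDA A ->
  exists A' : MPDA Sigma,
    [/\ wf_MPDA A', pop_normalized A' & forall w, lang A' w <-> lang A w].
Proof.
move=> wfA; exists (pop_normalize A); split.
- exact: pop_normalize_wf.
- exact: pop_normalize_pop_normalized.
- exact: lang_pop_normalize.
Qed.
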